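(* Let $G_a=(V,E_a)$ with $E_a\subseteq E$ a set of directed links without self-loops, let $D_a^+$ be its maximum out-degree, and let $\Delta\ge1$ be an integer. For an integer $B\ge1$ and directed graphs $G^{(t)}=(V,E^{(t)})$, $t=0,\dots,B-1$, with $\bigcup_{t=0}^{B-1}E^{(t)}=E_a$, define $$F(B):=\Big(\sum_{t=0}^{B-1}\tau(G^{(t)})\Big)\Delta^2B\left(\Big\lceil\frac{D_a^+}{B}\Big\rceil+1\right)^{4\Delta B}.$$ Then $$F(B)\ge F(1)=\tau(G_a)\,\Delta^2(1+D_a^+)^{4\Delta}.$$
   Context: $G=(V,E)$ is a bidirected directed base topology on $V=\{1,\dots,n\}$. Communication model: two distinct directed links $(i,j),(k,l)$ (with $i\ne j$, $k\ne l$) can be scheduled in the same transmission slot iff (a) $i\ne l$ and $j\ne k$ (half-duplex), and (b) if $i\ne k$ then $(i,l)\notin E$ and $(k,j)\notin E$ (interference); otherwise they conflict. For a set $E'$ of activated links, its conflict graph is the undirected graph with vertex set $E'$ and an edge between every conflicting pair. For $H=(V,E')$, $\tau(H)$ denotes the chromatic number of the conflict graph of $E'$ (the minimum number of collision-free transmission slots needed to schedule all links of $E'$; $\tau=0$ if $E'=\emptyset$). The maximum out-degree $D_a^+$ is $\max_j|\{i:(j,i)\in E_a\}|$. *)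

From mathcomp Require Import all_boot all_order.
Set Implicit Arguments. Unset Strict Implicit. Unset Printing Implicit Defensive.

(* Vertices V = {1..n} are represented by 'I_n; a directed link (i,j) is a pair. *)
Notation link n := ((ordinal n) * (ordinal n))%type.

(* Compatibility of two links (i,j), (k,l) w.r.t. base topology E:
   (a) half-duplex: i <> l and j <> k;
   (b) interference: if i <> k then (i,l) \notin E and (k,j) \notin E. *)
Definition compatible n (E : rel 'I_n) (e1 e2 : link n) : bool :=
  let: (i, j) := e1 in let: (k, l) := e2 in
  [&& i != l, j != k & (i != k) ==> (~~ E i l && ~~ E k j)].

Definition conflict n (E : rel 'I_n) (e1 e2 : link n) : bool :=
  (e1 != e2) && ~~ compatible E e1 e2.

Definition colorable n (E : rel 'I_n) (E' : {set link n}) (k : nat) : bool :=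
  [exists f : {ffun link n -> 'I_k.+1},
     [forall e in E', f e < k] &&
     [forall e1 in E', forall e2 in E', conflict E e1 e2 ==> (f e1 != f e2)]].

Lemma colorable_exists n (E : rel 'I_n) (E' : {set link n}) :
  exists k, colorable E E' k.
Proof.
exists #|{: link n}|; apply/existsP.
exists [ffun e => widen_ord (leqnSn _) (enum_rank e)]; apply/andP; split.
  by apply/forallP => e; apply/implyP => _; rewrite ffunE /=.
apply/forallP => e1; apply/implyP => _; apply/forallP => e2; apply/implyP => _.
apply/implyP => /andP [ne _]; rewrite !ffunE.
apply: contra ne => /eqP H; apply/eqP; apply: enum_rank_inj.
by apply: val_inj; move: H => /(congr1 val).
Qed.

(* tau(H): chromatic number of the conflict graph of E' (0 if E' is empty). *)
Definition tau n (E : rel 'I_n) (E' : {set link n}) : nat :=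
  ex_minn (colorable_exists E E').

Definition max_outdeg n (Ea : {set link n}) : nat :=
  \max_(j : 'I_n) #|[set i : 'I_n | (j, i) \in Ea]|.

Definition ceildiv (a b : nat) : nat := (a + b.-1) %/ b.

From mathcomp Require Import all_boot all_order.
From mathcomp Require Import zify.

(* Colouring the pieces [Et t] with disjoint palettes schedules their union [Ea],
   so [tau Ea <= \sum_t tau (Et t)]. Since [D <= B * ceil(D/B)], Bernoulli's
   inequality gives [1 + D <= (ceil(D/B) + 1)^B]; raising to [4 Delta] and using
   [B >= 1] for the extra factor finishes. No property of the topology, and not
   [Delta >= 1], is needed. *)

Section Colorings.

Variables (n : nat) (E : rel 'I_n).

Definition proper_coloring (X : {set link n}) (k : nat) (f : link n -> nat) :=
  {in X, forall e, f e < k} /\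
  {in X &, forall e1 e2, conflict E e1 e2 -> f e1 != f e2}.

Lemma colorableP X k :
  reflect (exists f, proper_coloring X k f) (colorable E X k).
Proof.
apply: (iffP existsP) => [[f /andP[/forall_inP fX /forall_inP fP]] | [f [fX fP]]].
  exists (fun e => nat_of_ord (f e)); split=> [e /fX // | e1 e2 /fP/forall_inP f12 /f12].
  by move=> /implyP/[apply].
have f_small e : (if e \in X then f e else 0) < k.+1.
  by case: ifP => [/fX/ltnW|_].
exists [ffun e => Ordinal (f_small e)]; apply/andP; split.
  by apply/forall_inP=> e eX; rewrite ffunE /= eX fX.
apply/forall_inP=> e1 e1X; apply/forall_inP=> e2 e2X; apply/implyP=> c12.
by rewrite !ffunE -val_eqE /= e1X e2X fP.
Qed.

Lemma colorable_setU A C a c :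
  colorable E A a -> colorable E C c -> colorable E (A :|: C) (a + c).
Proof.
move=> /colorableP[f [fA fP]] /colorableP[g [gC gP]]; apply/colorableP.
exists (fun e => if e \in A then f e else a + g e); split.
  move=> e; rewrite inE; case: ifP => [/fA | _ /= /gC]; lia.
move=> e1 e2; rewrite !inE => /orP e1AC /orP e2AC c12.
case: ifP => e1A; case: ifP => e2A.
- exact: fP.
- by have := fA _ e1A; lia.
- by have := fA _ e2A; lia.
- rewrite eqn_add2l; apply: gP c12.
    by case: e1AC => //; rewrite e1A.
  by case: e2AC => //; rewrite e2A.
Qed.

Lemma colorable_tau X : colorable E X (tau E X).
Proof. by rewrite /tau; case: ex_minnP. Qed.

Lemma tau_min X k : colorable E X k -> tau E X <= k.
Proof. by rewrite /tau; case: ex_minnP => m _; apply. Qed.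

Lemma colorable_bigcup m (X : 'I_m -> {set link n}) :
  colorable E (\bigcup_(t < m) X t) (\sum_(t < m) tau E (X t)).
Proof.
elim: m X => [|m IHm] X.
  by rewrite !big_ord0; apply/colorableP; exists (fun=> 0); split=> ?; rewrite inE.
rewrite !big_ord_recr /=; apply: colorable_setU; [exact: IHm | exact: colorable_tau].
Qed.

Lemma tau_bigcup m (X : 'I_m -> {set link n}) :
  tau E (\bigcup_(t < m) X t) <= \sum_(t < m) tau E (X t).
Proof. exact/tau_min/colorable_bigcup. Qed.

End Colorings.

Lemma leq_mul_ceildiv a b : 0 < b -> a <= ceildiv a b * b.
Proof. by move=> b_gt0; have := ltn_ceil (a + b.-1) b_gt0; rewrite /ceildiv; lia. Qed.

Lemma bernoulli_leq c m : 1 + c * m <= (c + 1) ^ m.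
Proof. by elim: m => [|m IHm]; rewrite ?expnS; nia. Qed.

Lemma leq_pow_ceildiv a b e : 0 < b ->
  (1 + a) ^ e <= (ceildiv a b + 1) ^ (e * b).
Proof.
move=> b_gt0; have [-> | e_gt0] := posnP e; first by rewrite mul0n !expn0.
rewrite mulnC expnM leq_exp2r //.
apply: leq_trans (bernoulli_leq _ b); have := @leq_mul_ceildiv a b b_gt0; lia.
Qed.

Theorem lemma3 (n : nat) (E : rel 'I_n)
  (Ebidir : forall i j, E i j = E j i)
  (Ea : {set link n})
  (EaE : forall i j, (i, j) \in Ea -> E i j)
  (Ea_noloop : forall i, (i, i) \notin Ea)
  (Delta : nat) (HDelta : 1 <= Delta)
  (B : nat) (HB : 1 <= B) (Et : 'I_B -> {set link n})
  (Hunion : \bigcup_(t < B) Et t = Ea) :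
  let D := max_outdeg Ea in
  (\sum_(t < B) tau E (Et t)) * Delta ^ 2 * B * (ceildiv D B + 1) ^ (4 * Delta * B)
  >= tau E Ea * Delta ^ 2 * (1 + D) ^ (4 * Delta).
Proof.
rewrite /=; have tau_sum : tau E Ea <= \sum_(t < B) tau E (Et t).
  by rewrite -Hunion; apply: tau_bigcup.
rewrite -(mulnA _ B); apply: leq_mul; first exact: leq_mul.
apply: leq_trans (leq_pmull _ HB); exact: leq_pow_ceildiv.
Qed.
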